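(* Let $B$ be a soluble skew left brace and let $I$ be a maximal ideal of $B$ (a proper ideal not contained in any other proper ideal). Then $B/I$ is an abelian brace and its group $(B/I,+)=(B/I,\cdot)$ is cyclic of prime order.
   Context: A skew left brace (brace) is a set $B$ with two group structures $(B,+)$ and $(B,\cdot)$ with $a(b+c)=ab-a+ac$; $\lambda_a(b)=-a+ab$. An ideal is a subset that is a normal subgroup of both groups and $\lambda_b$-invariant for all $b$. For ideals $I,J$, $[I,J]$ is the smallest ideal containing $[I,J]_+$, $[I,J]_\cdot$ and all $ij-(i+j)$; $B$ is abelian if $[B,B]=0$. $B$ is soluble if there is a chain $B=I_0\supseteq\cdots\supseteq I_n=0$ with each $I_i$ an ideal of the brace $I_{i-1}$ and $I_{i-1}/I_i$ abelian. *)

From mathcomp Require Import all_boot all_order.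
Set Implicit Arguments. Unset Strict Implicit. Unset Printing Implicit Defensive.

Record skew_brace := SkewBrace {
  bcarrier :> Type;
  badd : bcarrier -> bcarrier -> bcarrier;
  bzero : bcarrier;
  bopp : bcarrier -> bcarrier;
  bmul : bcarrier -> bcarrier -> bcarrier;
  bone : bcarrier;
  binv : bcarrier -> bcarrier;
  baddA : forall a b c, badd a (badd b c) = badd (badd a b) c;
  badd0l : forall a, badd bzero a = a;
  badd0r : forall a, badd a bzero = a;
  baddNl : forall a, badd (bopp a) a = bzero;
  baddNr : forall a, badd a (bopp a) = bzero;
  bmulA : forall a b c, bmul a (bmul b c) = bmul (bmul a b) c;
  bmul1l : forall a, bmul bone a = a;
  bmul1r : forall a, bmul a bone = a;
  bmulVl : forall a, bmul (binv a) a = bone;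
  bmulVr : forall a, bmul a (binv a) = bone;
  brace_law : forall a b c,
    bmul a (badd b c) = badd (badd (bmul a b) (bopp a)) (bmul a c)
}.

Section BraceDefs.
Variable B : skew_brace.

Definition bsub (a b : B) : B := badd a (bopp b).

Definition blambda (a b : B) : B := badd (bopp a) (bmul a b).

Fixpoint bnat_mul (n : nat) (g : B) : B :=
  match n with O => bzero B | S m => badd (bnat_mul m g) g end.

(* I is an ideal of the sub-brace S (S itself an ideal of some brace in a
   chain, hence a sub-brace): I is contained in S, is a subgroup of (S,+)
   and of (S,.), normal in both, and lambda_s-invariant for all s in S. *)
Definition ideal_in (S I : B -> Prop) : Prop :=
  (forall x, I x -> S x) /\
  I (bzero B) /\
  (forall x y, I x -> I y -> I (bsub x y)) /\
  (forall x y, I x -> I y -> I (bmul x (binv y))) /\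
  (forall s x, S s -> I x -> I (badd (badd s x) (bopp s))) /\
  (forall s x, S s -> I x -> I (bmul (bmul s x) (binv s))) /\
  (forall s x, S s -> I x -> I (blambda s x)).

Definition ideal (I : B -> Prop) : Prop := ideal_in (fun _ => True) I.

(* The quotient brace S/I (I an ideal of S) is abelian, i.e. [S/I,S/I] = 0.
   Since [S/I,S/I] is the smallest ideal containing the additive
   commutators, multiplicative commutators and the elements ab-(a+b) of S/I,
   it is 0 iff all these generators vanish in S/I, i.e. lie in I when
   computed in S. *)
Definition abelian_quot (S I : B -> Prop) : Prop :=
  forall a b, S a -> S b ->
    [/\ I (badd (badd (badd (bopp a) (bopp b)) a) b),
        I (bmul (bmul (bmul (binv a) (binv b)) a) b) &
        I (bsub (bmul a b) (badd a b))].

Definition soluble : Prop :=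
  exists (n : nat) (I : nat -> B -> Prop),
    [/\ (forall x, I 0 x),
        (forall x, I n x <-> x = bzero B) &
        (forall i, i < n ->
           ideal_in (I i) (I i.+1) /\ abelian_quot (I i) (I i.+1))].

Definition maximal_ideal (I : B -> Prop) : Prop :=
  [/\ ideal I,
      (exists x, ~ I x) &
      (forall J, ideal J -> (forall x, I x -> J x) -> (exists x, ~ J x) ->
         forall x, J x -> I x)].

(* The additive group (B/I,+) is cyclic of order p: there is g such that
   the classes of 0*g, 1*g, ..., (p-1)*g are exactly the classes of B/I,
   each class occurring once. *)
Definition quot_add_cyclic_of_order (I : B -> Prop) (p : nat) : Prop :=
  exists g : B,
    (forall b, exists2 k, k < p & I (bsub b (bnat_mul k g))) /\
    (forall k l, k < p -> l < p ->
       I (bsub (bnat_mul k g) (bnat_mul l g)) -> k = l).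

End BraceDefs.

(* Elements of B/I are handled through the congruence x ≡ y :<-> x - y ∈ I,
   which is compatible with both group laws of B.  Push the soluble chain B = I_0 ⊇ ... ⊇ I_n = 0 into B/I by
     taking J_k = (I_k + I)/I.  Let k+1 be the first index with J_(k+1) ≠ B/I.
     Since J_k = B/I, the set J_(k+1) is an ideal of B containing I, hence it
     is I by maximality, and B/I is a quotient of the abelian brace I_k/I_(k+1).
   - Cyclicity.  In the abelian brace B/I every additive subgroup is an
     ideal; so for g ∉ I the subgroup spanned by g and I is all of B.  For
     every d, either d·g ∈ I or g lies in the span of d·g; this shows that the
     additive order m of g modulo I exists and is prime, and that 0·g, ...,
     (m-1)·g represent B/I without repetition. *)
From mathcomp Require Import all_boot all_order.
From mathcomp Require Import zify.
From Stdlib Require Import Classical Wf_nat.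
Set Implicit Arguments. Unset Strict Implicit. Unset Printing Implicit Defensive.

Local Notation "a ⊕ b" := (badd a b) (at level 50, left associativity).
Local Notation "⊖ a" := (bopp a) (at level 35, right associativity).
Local Notation "a ⊙ b" := (bmul a b) (at level 40, left associativity).

Lemma ex_least (P : nat -> Prop) :
  (exists n, P n) -> exists m, P m /\ forall k, k < m -> ~ P k.
Proof.
move=> hP.
have [m [[Pm m_least] _]] :=
  @dec_inh_nat_subset_has_unique_least_element P (fun n => classic (P n)) hP.
by exists m; split=> // k km /m_least/leP; lia.
Qed.

Section BraceArithmetic.
Variable B : skew_brace.
Implicit Types a b c : B.

Lemma addKl a b : ⊖a ⊕ (a ⊕ b) = b.
Proof. by rewrite baddA baddNl badd0l. Qed.
Lemma addNKl a b : a ⊕ (⊖a ⊕ b) = b.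
Proof. by rewrite baddA baddNr badd0l. Qed.
Lemma addKr a b : a ⊕ b ⊕ ⊖b = a.
Proof. by rewrite -baddA baddNr badd0r. Qed.
Lemma addNKr a b : a ⊕ ⊖b ⊕ b = a.
Proof. by rewrite -baddA baddNl badd0r. Qed.
Lemma opp_uniq a b : a ⊕ b = bzero B -> b = ⊖a.
Proof. by move=> h; rewrite -(addKl a b) h badd0r. Qed.
Lemma oppK a : ⊖ ⊖ a = a.
Proof. by symmetry; apply: opp_uniq; rewrite baddNl. Qed.
Lemma opp0 : ⊖ bzero B = bzero B.
Proof. by symmetry; apply: opp_uniq; rewrite badd0l. Qed.
Lemma oppD a b : ⊖(a ⊕ b) = ⊖b ⊕ ⊖a.
Proof. by symmetry; apply: opp_uniq; rewrite baddA addKr baddNr. Qed.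

Lemma mulKl a b : binv a ⊙ (a ⊙ b) = b.
Proof. by rewrite bmulA bmulVl bmul1l. Qed.
Lemma mulKr a b : a ⊙ b ⊙ binv b = a.
Proof. by rewrite -bmulA bmulVr bmul1r. Qed.
Lemma inv_uniq a b : a ⊙ b = bone B -> b = binv a.
Proof. by move=> h; rewrite -(mulKl a b) h bmul1r. Qed.
Lemma invK a : binv (binv a) = a.
Proof. by symmetry; apply: inv_uniq; rewrite bmulVl. Qed.

Lemma one_zero : bone B = bzero B.
Proof.
have h := brace_law (bone B) (bzero B) (bzero B).
rewrite badd0l !bmul1l badd0r badd0l in h.
by rewrite -(oppK (bone B)) -h opp0.
Qed.

Lemma mulr0 a : a ⊙ bzero B = a.
Proof.
have h := brace_law a (bzero B) (bzero B).
rewrite badd0l in h.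
have h2 := congr1 (fun z => z ⊕ ⊖(a ⊙ bzero B)) h.
rewrite /= baddNr addKr in h2.
by rewrite -(addNKr (a ⊙ bzero B) a) -h2 badd0l.
Qed.

Lemma mulrN a b : a ⊙ ⊖b = ⊖(a ⊙ b ⊕ ⊖a) ⊕ a.
Proof.
have h := brace_law a b (⊖b).
rewrite baddNr mulr0 in h.
have := congr1 (fun z => ⊖(a ⊙ b ⊕ ⊖a) ⊕ z) h.
by rewrite /= addKl => ->.
Qed.

Lemma lambdaM a b c : blambda a (blambda b c) = blambda (a ⊙ b) c.
Proof.
rewrite /blambda brace_law mulrN addKr oppD oppK -bmulA.
by rewrite -(baddA a) addKl.
Qed.

Lemma lambdaK a c : blambda (binv a) (blambda a c) = c.
Proof. by rewrite lambdaM bmulVl /blambda bmul1l one_zero opp0 badd0l. Qed.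

Lemma bnat_mulD k l (g : B) : bnat_mul (k + l) g = bnat_mul k g ⊕ bnat_mul l g.
Proof.
elim: l => [|l IH]; first by rewrite addn0 /= badd0r.
by rewrite addnS /= IH baddA.
Qed.

Lemma bnat_mulM k d (g : B) : bnat_mul k (bnat_mul d g) = bnat_mul (k * d) g.
Proof.
elim: k => [|k IH]; first by rewrite mul0n.
by rewrite /= IH mulSnr bnat_mulD.
Qed.

Lemma bnat_mulB k l (g : B) :
  l <= k -> bnat_mul k g ⊕ ⊖ bnat_mul l g = bnat_mul (k - l) g.
Proof. by move=> lk; rewrite -{1}(subnK lk) bnat_mulD addKr. Qed.

End BraceArithmetic.

Section Congruence.
Variables (B : skew_brace) (I : B -> Prop).
Hypothesis I_ideal : ideal I.
Implicit Types a b s x y z : B.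

Lemma ideal0 : I (bzero B).
Proof. by case: I_ideal => _ []. Qed.
Lemma idealB x y : I x -> I y -> I (x ⊕ ⊖y).
Proof. by case: I_ideal => _ [_ [h _]]; apply: h. Qed.
Lemma ideal_conj s x : I x -> I (s ⊕ x ⊕ ⊖s).
Proof. by case: I_ideal => _ [_ [_ [_ [h _]]]]; apply: h. Qed.
Lemma ideal_mconj s x : I x -> I (s ⊙ x ⊙ binv s).
Proof. by case: I_ideal => _ [_ [_ [_ [_ [h _]]]]]; apply: h. Qed.
Lemma ideal_lambda s x : I x -> I (blambda s x).
Proof. by case: I_ideal => _ [_ [_ [_ [_ [_ h]]]]]; apply: h. Qed.

Lemma idealN x : I x -> I (⊖x).
Proof. by move=> h; have := idealB ideal0 h; rewrite badd0l. Qed.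
Lemma idealD x y : I x -> I y -> I (x ⊕ y).
Proof. by move=> hx hy; have := idealB hx (idealN hy); rewrite oppK. Qed.

Definition eqmod x y := I (x ⊕ ⊖y).
Local Notation "x ≡ y" := (eqmod x y) (at level 70).

Lemma eqmod_refl x : x ≡ x.
Proof. by rewrite /eqmod baddNr; apply: ideal0. Qed.
Lemma eqmod_sym x y : x ≡ y -> y ≡ x.
Proof. by rewrite /eqmod => h; have := idealN h; rewrite oppD oppK. Qed.
Lemma eqmod_trans x y z : x ≡ y -> y ≡ z -> x ≡ z.
Proof. by rewrite /eqmod => h1 h2; have := idealD h1 h2; rewrite baddA addNKr. Qed.

(* Normality of I in (B,+): left and right cosets agree. *)
Lemma eqmodE x y : x ≡ y <-> I (⊖y ⊕ x).
Proof.
rewrite /eqmod; split=> h.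
- by have := ideal_conj (⊖y) h; rewrite oppK baddA addNKr.
- by have := ideal_conj y h; rewrite addNKl.
Qed.

Lemma eqmod0 x : I x <-> x ≡ bzero B.
Proof. by rewrite /eqmod opp0 badd0r. Qed.
Lemma eqmod_ideal x y : I x -> y ≡ x -> I y.
Proof. by rewrite /eqmod => hx h; have := idealD h hx; rewrite addNKr. Qed.

Lemma addmod x x' y y' : x ≡ x' -> y ≡ y' -> x ⊕ y ≡ x' ⊕ y'.
Proof.
rewrite /eqmod => hx hy.
by have := idealD (ideal_conj x hy) hx; rewrite oppD !baddA addNKr.
Qed.

Lemma oppmod x x' : x ≡ x' -> ⊖x ≡ ⊖x'.
Proof. by move=> h; apply/eqmodE; rewrite oppK; apply: eqmod_sym. Qed.

(* Left compatibility uses x ⊙ y = x ⊙ y' + λ_x(-y' + y). *)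
Lemma mulmodl x y y' : y ≡ y' -> x ⊙ y ≡ x ⊙ y'.
Proof.
move/eqmodE=> h; apply/eqmodE.
have -> : x ⊙ y = x ⊙ y' ⊕ blambda x (⊖y' ⊕ y).
  by rewrite /blambda baddA -brace_law addNKl.
by rewrite addKl; apply: ideal_lambda.
Qed.

(* Right compatibility: x'⁻¹x lies in I, and so does its y-conjugate. *)
Lemma mulmodr x x' y : x ≡ x' -> x ⊙ y ≡ x' ⊙ y.
Proof.
move=> h.
have quot_in_I : I (binv x' ⊙ x).
  have : I (blambda x' (binv x' ⊙ x)).
    by rewrite /blambda bmulA bmulVr bmul1l; apply/eqmodE.
  by move/(ideal_lambda (binv x')); rewrite lambdaK.
have conj_in_I := ideal_mconj (binv y) quot_in_I.
rewrite invK in conj_in_I.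
have -> : x ⊙ y = x' ⊙ y ⊙ (binv y ⊙ (binv x' ⊙ x) ⊙ y).
  by rewrite !bmulA mulKr bmulVr bmul1l.
have conj_one : binv y ⊙ (binv x' ⊙ x) ⊙ y ≡ bone B.
  by rewrite one_zero -eqmod0.
by apply: eqmod_trans (mulmodl (x' ⊙ y) conj_one) _; rewrite bmul1r; apply: eqmod_refl.
Qed.

Lemma mulmod x x' y y' : x ≡ x' -> y ≡ y' -> x ⊙ y ≡ x' ⊙ y'.
Proof. by move=> hx hy; apply: eqmod_trans (mulmodr y hx) (mulmodl x' hy). Qed.

Lemma invmod x x' : x ≡ x' -> binv x ≡ binv x'.
Proof.
move=> h.
have e : binv x ⊙ x' ⊙ binv x' ≡ binv x ⊙ x ⊙ binv x'.
  by apply/mulmodr/mulmodl/eqmod_sym.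
by rewrite mulKr bmulVl bmul1l in e.
Qed.

Lemma maximal_ideal_top J g : maximal_ideal I ->
  ideal J -> (forall x, I x -> J x) -> ~ J g -> forall x, J x -> I x.
Proof. by case=> _ _ hmax hJ hIJ hg; apply: hmax => //; exists g. Qed.

Section AbelianQuotient.
Hypothesis I_abelian : abelian_quot (fun _ => True) I.

Lemma addmodC a b : a ⊕ b ≡ b ⊕ a.
Proof.
have [h _ _] := @I_abelian (⊖a) (⊖b) Logic.I Logic.I.
by rewrite !oppK in h; rewrite /eqmod oppD !baddA.
Qed.
Lemma mul_addmod a b : a ⊙ b ≡ a ⊕ b.
Proof. by have [_ _ h] := @I_abelian a b Logic.I Logic.I. Qed.
Lemma inv_oppmod a : binv a ≡ ⊖a.
Proof.
have e := addmod (eqmod_refl (⊖a)) (eqmod_sym (mul_addmod a (binv a))).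
by rewrite addKl bmulVr one_zero badd0r in e.
Qed.

(* The additive subgroup of B/I generated by h, pulled back to B. *)
Definition span h x := exists k l, x ≡ bnat_mul k h ⊕ ⊖ bnat_mul l h.

Lemma span_eqmod h x y : span h x -> y ≡ x -> span h y.
Proof. by move=> [k [l e]] e'; exists k, l; apply: eqmod_trans e' e. Qed.

Lemma span_ideal_elt h x : I x -> span h x.
Proof. by move=> hx; exists 0, 0; rewrite /= opp0 badd0r; rewrite -eqmod0. Qed.

Lemma span_self h : span h h.
Proof. by exists 1, 0; rewrite /= badd0l opp0 badd0r; apply: eqmod_refl. Qed.

Lemma spanB h x y : span h x -> span h y -> span h (x ⊕ ⊖y).
Proof.
move=> [k [l ex]] [k' [l' ey]]; exists (k + l'), (l + k').
apply: eqmod_trans (addmod ex (oppmod ey)) _.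
rewrite oppD oppK !bnat_mulD oppD -baddA.
apply: eqmod_trans (addmod (eqmod_refl _) (addmodC _ _)) _.
by rewrite !baddA; apply: eqmod_refl.
Qed.

(* In an abelian quotient every additive subgroup is an ideal. *)
Lemma span_ideal h : ideal (span h).
Proof.
do 6?split=> //; first by apply: span_ideal_elt; apply: ideal0.
- exact: spanB.
- move=> x y hx hy; apply: span_eqmod (spanB hx hy) _.
  exact: eqmod_trans (mul_addmod _ _) (addmod (eqmod_refl _) (inv_oppmod _)).
- move=> s x _ hx; apply: span_eqmod hx _.
  by apply: eqmod_trans (addmod (addmodC s x) (eqmod_refl _)) _; rewrite addKr; apply: eqmod_refl.
- move=> s x _ hx; apply: span_eqmod hx _.
  apply: eqmod_trans (mul_addmod _ _) _.
  apply: eqmod_trans (addmod (mul_addmod s x) (inv_oppmod s)) _.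
  by apply: eqmod_trans (addmod (addmodC s x) (eqmod_refl _)) _; rewrite addKr; apply: eqmod_refl.
- move=> s x _ hx; apply: span_eqmod hx _.
  apply: eqmod_trans (addmod (eqmod_refl _) (mul_addmod s x)) _.
  by rewrite addKl; apply: eqmod_refl.
Qed.

Section Generator.
Hypothesis I_maximal : maximal_ideal I.
Variable g : B.
Hypothesis g_notin_I : ~ I g.

(* By maximality, g and I span B. *)
Lemma span_full b : span g b.
Proof.
apply: NNPP => hb.
apply: g_notin_I; apply: (maximal_ideal_top I_maximal (span_ideal g) (@span_ideal_elt g) hb).
exact: span_self.
Qed.

Lemma eqmod_mult_diff k l :
  l <= k -> bnat_mul k g ≡ bnat_mul l g -> I (bnat_mul (k - l) g).
Proof. by move=> lk; rewrite /eqmod bnat_mulB. Qed.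

(* Either d·g ∈ I, or g is a multiple of d·g modulo I (written with
   naturals: (l d + 1)·g ≡ (k d)·g). *)
Lemma multiple_dichotomy d : I (bnat_mul d g) \/
  exists k l, bnat_mul (l * d).+1 g ≡ bnat_mul (k * d) g.
Proof.
case: (classic (span (bnat_mul d g) g)) => [[k [l e]]|hn]; [right|left].
  exists k, l; rewrite !bnat_mulM in e.
  have e2 := addmod e (eqmod_refl (bnat_mul (l * d) g)).
  by rewrite addNKr in e2; apply: eqmod_trans e2; apply: addmodC.
apply: (maximal_ideal_top I_maximal (span_ideal _) (@span_ideal_elt _) hn).
exact: span_self.
Qed.

Lemma exists_order : exists N, 0 < N /\ I (bnat_mul N g).
Proof.
case: (multiple_dichotomy 2) => [h|[k [l e]]]; first by exists 2.
case: (leqP (k * 2) (l * 2).+1) => hkl.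
  by exists ((l * 2).+1 - k * 2); split; [lia | apply: eqmod_mult_diff].
exists (k * 2 - (l * 2).+1); split; first lia.
exact: eqmod_mult_diff (ltnW hkl) (eqmod_sym e).
Qed.

Section Order.
Variable m : nat.
Hypothesis m_gt0 : 0 < m.
Hypothesis m_annihilates : I (bnat_mul m g).
Hypothesis m_least : forall k, k < m -> ~ (0 < k /\ I (bnat_mul k g)).

Lemma ideal_mult_order q : I (bnat_mul (q * m) g).
Proof.
rewrite -bnat_mulM; elim: q => [|q IH] /=; first exact: ideal0.
exact: idealD.
Qed.

Lemma order_dvd N : I (bnat_mul N g) -> m %| N.
Proof.
move=> hN.
have hr : I (bnat_mul (N %% m) g).
  have := idealD (idealN (ideal_mult_order (N %/ m))) hN.
  by rewrite {2}(divn_eq N m) bnat_mulD addKl.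
case: (posnP (N %% m)) => [h0|hpos]; first by rewrite /dvdn h0.
by case: (m_least (ltn_pmod N m_gt0)).
Qed.

Lemma eqmod_mult_modn k l : bnat_mul k g ≡ bnat_mul l g -> k = l %[mod m].
Proof.
wlog hlk : k l / l <= k => [hw e|e].
  by case: (leqP l k) => [|/ltnW] h; [apply: hw | symmetry; apply: hw (eqmod_sym e)].
rewrite -(subnK hlk); have [q ->] := dvdnP (order_dvd (eqmod_mult_diff hlk e)).
by rewrite modnMDl.
Qed.

Lemma mult_modn N : bnat_mul N g ≡ bnat_mul (N %% m) g.
Proof. by rewrite {1}(divn_eq N m) bnat_mulD /eqmod addKr; apply: ideal_mult_order. Qed.

Lemma order_prime : prime m.
Proof.
apply/primeP; split.
  suff : m != 1 by lia.
  by apply/eqP => m1; apply: g_notin_I; move: m_annihilates; rewrite m1 /= badd0l.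
move=> d dm; have d_gt0 : 0 < d by apply: dvdn_gt0 dm.
case: (multiple_dichotomy d) => [hd|[k [l /eqmod_mult_modn e]]].
  by apply/orP; right; rewrite eqn_dvd dm order_dvd.
move/(congr1 (modn^~ d)): e; rewrite !modn_dvdm // -addn1 modnMDl modnMl.
by case: (leqP d 1) => [|/modn_small ->]; lia.
Qed.

Lemma quot_cyclic_of_order : quot_add_cyclic_of_order I m.
Proof.
exists g; split=> [b|k l hk hl /eqmod_mult_modn]; last by rewrite !modn_small.
have [k [l e]] := span_full b.
exists ((k + l * (m - 1)) %% m); first exact: ltn_pmod.
apply: eqmod_trans e (eqmod_trans _ (mult_modn _)).
rewrite bnat_mulD; apply: addmod (eqmod_refl _) _.
rewrite /eqmod -oppD -bnat_mulD; apply: idealN.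
have -> : l * (m - 1) + l = l * m by rewrite -mulnSr subn1 prednK.
exact: ideal_mult_order.
Qed.

End Order.
End Generator.

Lemma maximal_abelian_quot_cyclic : maximal_ideal I ->
  exists p, prime p /\ quot_add_cyclic_of_order I p.
Proof.
move=> I_maximal; have [_ [g g_notin_I] _] := I_maximal.
have [m [[m_gt0 m_ann] m_least]] := ex_least (exists_order I_maximal g).
exists m; split; first exact: order_prime m_least.
exact (quot_cyclic_of_order I_maximal g_notin_I m_gt0 m_ann m_least).
Qed.

End AbelianQuotient.

Section SolubleChain.
Hypothesis I_maximal : maximal_ideal I.
Variables (n : nat) (Ic : nat -> B -> Prop).
Hypothesis Ic_top : forall x, Ic 0 x.
Hypothesis Ic_bottom : forall x, Ic n x <-> x = bzero B.
Hypothesis Ic_step : forall i, i < n ->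
  ideal_in (Ic i) (Ic i.+1) /\ abelian_quot (Ic i) (Ic i.+1).

(* J_k: the preimage in B of the image of I_k in B/I. *)
Definition chain_image k x := exists y, Ic k y /\ x ≡ y.

Lemma chain_image_ideal k : k < n ->
  (forall x, chain_image k x) -> ideal (chain_image k.+1).
Proof.
move=> kn full; have [[_ [h0 [hsub [hdiv [hconj [hmconj hlam]]]]]] _] := Ic_step kn.
do 6?split=> //.
- by exists (bzero B); split; [apply: h0 | apply: eqmod_refl].
- move=> x y [x' [hx ex]] [y' [hy ey]].
  by exists (bsub x' y'); split; [apply: hsub | apply: addmod ex (oppmod ey)].
- move=> x y [x' [hx ex]] [y' [hy ey]].
  by exists (x' ⊙ binv y'); split; [apply: hdiv | apply: mulmod ex (invmod ey)].
- move=> s x _ [x' [hx ex]]; have [s' [hs es]] := full s.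
  exists (s' ⊕ x' ⊕ ⊖s'); split; first exact: hconj.
  exact: addmod (addmod es ex) (oppmod es).
- move=> s x _ [x' [hx ex]]; have [s' [hs es]] := full s.
  exists (s' ⊙ x' ⊙ binv s'); split; first exact: hmconj.
  exact: mulmod (mulmod es ex) (invmod es).
- move=> s x _ [x' [hx ex]]; have [s' [hs es]] := full s.
  by exists (blambda s' x'); split; [apply: hlam | apply: addmod (oppmod es) (mulmod es ex)].
Qed.

Lemma chain_critical_step :
  exists k, [/\ k < n, forall x, chain_image k x & forall x, chain_image k.+1 x -> I x].
Proof.
have n_not_full : ~ forall x, chain_image n x.
  have [_ [x x_notin_I] _] := I_maximal.
  by move=> /(_ x) [y [/Ic_bottom -> e]]; apply: x_notin_I; rewrite eqmod0.
have [[|k] [not_full first]] := ex_least (ex_intro (fun k => ~ forall x, chain_image k x) n n_not_full).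
  by case: not_full => x; exists x; split; [apply: Ic_top | apply: eqmod_refl].
have k_full : forall x, chain_image k x by apply: NNPP; apply: first.
have kn : k < n by rewrite ltnNge; apply/negP => nk; apply: (first n) n_not_full; lia.
exists k; split=> //.
have [[_ [h0 _]] _] := Ic_step kn.
have [g g_out] := not_all_ex_not _ _ not_full.
apply: (maximal_ideal_top I_maximal (chain_image_ideal kn k_full) _ g_out).
by move=> x hx; exists (bzero B); split; [apply: h0 | rewrite -eqmod0].
Qed.

(* Hence B/I is a quotient of the abelian brace I_k/I_(k+1). *)
Lemma soluble_quot_abelian : abelian_quot (fun _ => True) I.
Proof.
have [k [kn k_full k1_in_I]] := chain_critical_step.
have [_ step_abelian] := Ic_step kn.
have toI z : Ic k.+1 z -> I z.
  by move=> hz; apply: k1_in_I; exists z; split=> //; apply: eqmod_refl.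
move=> a b _ _.
have [a' [ha ea]] := k_full a; have [b' [hb eb]] := k_full b.
have [h1 h2 h3] := step_abelian a' b' ha hb.
split; apply: eqmod_ideal (toI _ _) _; [exact: h1 | | exact: h2 | | exact: h3 |].
- exact: addmod (addmod (addmod (oppmod ea) (oppmod eb)) ea) eb.
- exact: mulmod (mulmod (mulmod (invmod ea) (invmod eb)) ea) eb.
- exact: addmod (mulmod ea eb) (oppmod (addmod ea eb)).
Qed.

End SolubleChain.
End Congruence.

Theorem corollary4p6 (B : skew_brace) (I : B -> Prop) :
  soluble B -> maximal_ideal I ->
  abelian_quot (fun _ => True) I /\
  exists p : nat, prime p /\ quot_add_cyclic_of_order I p.
Proof.
move=> [n [Ic [Ic_top Ic_bottom Ic_step]]] I_maximal.
have I_ideal : ideal I by case: I_maximal.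
have I_abelian := soluble_quot_abelian I_ideal I_maximal Ic_top Ic_bottom Ic_step.
split=> //; exact: maximal_abelian_quot_cyclic.
Qed.
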